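(* Let $n \ge 2$ and let $T$ be a triangulation of the cyclic polytope $C = C(n+2,3)$, whose vertices are labelled $0,1,\dots,n+1$. Let $\{v,w\} \in F_1(T) \setminus F_1(C)$ be an internal edge with $v < w$. Then there are vertices $a, b, c$ of $C$ with $a < v < b < w < c$ such that $\{\{v,w,a\},\{v,w,b\},\{v,w,c\}\} \subseteq F_2(T)$.
   Context: The cyclic polytope $C(n+2,3)$ is the convex hull of $n+2$ points $\mu_3(t_0),\dots,\mu_3(t_{n+1})$ on the moment curve $\mu_3(t)=(t,t^2,t^3)$ with $t_0<t_1<\dots<t_{n+1}$; its vertices are labelled $0,1,\dots,n+1$ in this order, and faces are identified with their vertex sets. Its edges are $F_1(C)=\{\{0,n+1\},\{0,i\},\{i,n+1\},\{i,i+1\} : 0<i<n+1\}$ and its 2-faces are $F_2(C)=\{\{0,i,i+1\},\{i-1,i,n+1\} : 0<i<n+1\}$. A triangulation of $C$ is a set $T$ of 3-simplices (4-element subsets of $\{0,\dots,n+1\}$) such that the union of their convex hulls is $C$ and any two of them intersect in a common (possibly empty) face. For a triangulation $T$, $F_1(T)$ is the set of 2-element subsets contained in some simplex of $T$, and $F_2(T)$ is the set of 3-element subsets contained in some simplex of $T$. *)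

From HB Require Import structures.
From mathcomp Require Import all_boot all_order all_algebra.
From mathcomp Require Import reals.
Set Implicit Arguments. Unset Strict Implicit. Unset Printing Implicit Defensive.
Import Order.TTheory GRing.Theory Num.Theory.
Local Open Scope ring_scope.

Definition moment3 {R : realType} (x : R) : 'rV[R]_3 := \row_(i < 3) x ^+ i.+1.

(* Vertex labels 0..n+1 are 'I_(n+2); t i is the parameter of vertex i. *)
Definition strictly_increasing {R : realType} {m : nat} (t : 'I_m -> R) : Prop :=
  forall i j : 'I_m, (i < j)%N -> t i < t j.

Definition conv {R : realType} {m : nat} (t : 'I_m -> R) (S : {set 'I_m})
  (x : 'rV[R]_3) : Prop :=
  exists lam : 'I_m -> R,
    [/\ forall i, 0 <= lam i,
        forall i, i \notin S -> lam i = 0,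
        \sum_(i < m) lam i = 1
      & x = \sum_(i < m) lam i *: moment3 (t i)].

Definition cyclic_polytope {R : realType} {m : nat} (t : 'I_m -> R) :=
  conv t setT.

Definition triangulation {R : realType} {m : nat} (t : 'I_m -> R)
  (T : {set {set 'I_m}}) : Prop :=
  [/\ forall s, s \in T -> #|s| = 4%N,
      forall x, cyclic_polytope t x <-> exists2 s, s \in T & conv t s x
    & forall s1 s2, s1 \in T -> s2 \in T ->
        exists2 r : {set 'I_m}, r \subset s1 :&: s2 &
          forall x, (conv t s1 x /\ conv t s2 x) <-> conv t r x].

Definition F1T {m : nat} (T : {set {set 'I_m}}) (e : {set 'I_m}) : Prop :=
  #|e| = 2%N /\ exists2 s, s \in T & e \subset s.
Definition F2T {m : nat} (T : {set {set 'I_m}}) (f : {set 'I_m}) : Prop :=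
  #|f| = 3%N /\ exists2 s, s \in T & f \subset s.

Definition F1C (n : nat) (e : {set 'I_(n.+2)}) : Prop :=
  exists i j : 'I_(n.+2), e = [set i; j] /\
    [\/ (val i = 0 /\ val j = n.+1)%N,
        (val i = 0 /\ 0 < val j < n.+1)%N,
        (0 < val i < n.+1 /\ val j = n.+1)%N
      | (0 < val i < n.+1 /\ val j = (val i).+1)%N].

(* A polynomial P of degree at most 3 is the restriction to the moment curve
   of an affine function on R^3, and the barycentric coordinates of a point in
   a 3-simplex spanned by moment-curve points are the Lagrange interpolation
   weights.  Let P vanish at t_v and t_w and be negative at some vertex z.
   Push the midpoint p of the edge vw slightly towards z: the pushed point lies
   in a simplex s of T, and for a small enough push p lies in s as well.  As p
   is interior to the edge vw of a simplex of T, s contains v and w.  P is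
   negative at the pushed point, hence at some vertex x of s, and {v, w, x} is
   a 2-face of T.  The polynomials (X - t_w)^2 (X - t_v), (X - t_v)(X - t_w)
   and -(X - t_v)^2 (X - t_w) place x before v, between v and w, and after w. *)

From mathcomp Require Import all_boot all_order all_algebra.
From mathcomp Require Import reals lra zify.
Set Implicit Arguments. Unset Strict Implicit. Unset Printing Implicit Defensive.
Import Order.TTheory GRing.Theory Num.Theory.
Local Open Scope ring_scope.

Section RealFacts.
Variable R : realFieldType.
Implicit Types a b x : R.

Lemma exists_pos_lbound (I : finType) (f : I -> R) :
  (forall i, 0 < f i) -> exists2 e, 0 < e <= 1 & forall i, e <= f i.
Proof.
move=> f_gt0; pose S := \sum_i (f i)^-1.
have S_ge0 : 0 <= S by apply: sumr_ge0 => i _; rewrite invr_ge0 ltW.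
exists (1 + S)^-1; first by rewrite invr_gt0 invf_le1; lra.
move=> i; rewrite -[f i]invrK lef_pV2 ?posrE ?invr_gt0 ?f_gt0 //; last by lra.
rewrite /S (bigD1 i) //=; suff : 0 <= \sum_(j | j != i) (f j)^-1 by lra.
by apply: sumr_ge0 => j _; rewrite invr_ge0 ltW.
Qed.

Lemma exists_small_perturbation (I : finType) (a b : I -> R) :
  exists2 e, 0 < e <= 1 & forall i, a i < 0 -> (1 - e) * a i + e * b i < 0.
Proof.
pose f i := if a i < 0 then - a i / (`|b i - a i| + 1) else 1.
have f_gt0 i : 0 < f i.
  rewrite /f; case: ifP => // ai_lt0.
  by apply: divr_gt0; [rewrite oppr_gt0 | apply: ltr_wpDl].
have [e e01 e_le] := exists_pos_lbound f_gt0.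
exists e => // i ai_lt0; have := e_le i; rewrite /f ai_lt0 ler_pdivlMr.
  by have := ler_norm (b i - a i); nra.
by apply: ltr_wpDl.
Qed.

Lemma sqr_mul_lt0_before a b x : a < b -> ((x - b) ^+ 2 * (x - a) < 0) = (x < a).
Proof.
move=> ab; have [-> | xb] := eqVneq x b.
  by rewrite subrr expr0n mul0r ltxx ltNge ltW.
by rewrite pmulr_rlt0 ?subr_lt0 // exprn_even_gt0 // subr_eq0.
Qed.

Lemma mul_lt0_between a b x : a < b -> ((x - a) * (x - b) < 0) = (a < x < b).
Proof.
move=> ab; apply/idP/andP => [|[]]; last by nra.
by case: (ltP a x); case: (ltP x b); nra.
Qed.

Lemma sqr_mul_gt0_after a b x : a < b -> (0 < (x - a) ^+ 2 * (x - b)) = (b < x).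
Proof.
move=> ab; have [-> | xa] := eqVneq x a.
  by rewrite subrr expr0n mul0r ltxx ltNge ltW.
by rewrite pmulr_rgt0 ?subr_gt0 // exprn_even_gt0 // subr_eq0.
Qed.

End RealFacts.

Lemma F2T_of_simplex m (T : {set {set 'I_m}}) s (v w x : 'I_m) :
  s \in T -> v \in s -> w \in s -> x \in s -> v != w -> v != x -> w != x ->
  F2T T [set v; w; x].
Proof.
move=> sT vs ws xs vw vx wx; split.
  by rewrite setUC cardsU1 cards2 !inE vw eq_sym (negPf vx) eq_sym (negPf wx).
by exists s => //; apply/subsetP => y; rewrite !inE => /orP[/orP[]|] /eqP ->.
Qed.

Section MomentCurve.
Variable R : realType.

Definition aff_poly (P : {poly R}) (X : 'rV[R]_3) : R :=
  P`_0 + \sum_(k < 3) P`_k.+1 * X ord0 k.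

Lemma aff_poly_moment (P : {poly R}) x :
  (size P <= 4)%N -> aff_poly P (moment3 x) = P.[x].
Proof.
move=> sP; rewrite (horner_coef_wide _ sP) big_ord_recl /aff_poly expr0 mulr1.
by congr (_ + _); apply: eq_bigr => k _; rewrite mxE.
Qed.

Lemma aff_poly_comb (I : finType) (P : {poly R}) (lam : I -> R)
    (Y : I -> 'rV[R]_3) :
  \sum_i lam i = 1 ->
  aff_poly P (\sum_i lam i *: Y i) = \sum_i lam i * aff_poly P (Y i).
Proof.
move=> lam1; rewrite /aff_poly.
under [RHS]eq_bigr do rewrite mulrDr.
rewrite big_split /= -mulr_suml lam1 mul1r; congr (_ + _).
under eq_bigr do rewrite summxE mulr_sumr.
rewrite exchange_big /=; apply: eq_bigr => i _; rewrite mulr_sumr.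
by apply: eq_bigr => k _; rewrite mxE mulrCA.
Qed.

Lemma aff_poly_comb2 (P : {poly R}) e X Y :
  aff_poly P ((1 - e) *: X + e *: Y) = (1 - e) * aff_poly P X + e * aff_poly P Y.
Proof.
have := @aff_poly_comb bool P (fun i => if i then 1 - e else e)
  (fun i => if i then X else Y).
by rewrite !big_bool /=; apply; rewrite subrK.
Qed.

Lemma aff_poly_sum (I : finType) (c : I -> R) (Q : I -> {poly R}) X :
  aff_poly (\sum_i c i *: Q i) X = \sum_i c i * aff_poly (Q i) X.
Proof.
rewrite /aff_poly coef_sum.
under [RHS]eq_bigr do rewrite mulrDr.
rewrite big_split /=; congr (_ + _); first by apply: eq_bigr => i _; rewrite coefZ.
under eq_bigr do rewrite coef_sum mulr_suml.
rewrite exchange_big /=; apply: eq_bigr => i _; rewrite mulr_sumr.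
by apply: eq_bigr => k _; rewrite coefZ mulrA.
Qed.

Section Convexity.
Variables (m : nat) (t : 'I_m -> R).

Lemma conv_vertex (S : {set 'I_m}) i : i \in S -> conv t S (moment3 (t i)).
Proof.
move=> iS; exists (fun j => (j == i)%:R); split.
- by move=> j; rewrite ler0n.
- by move=> j jS; case: eqP jS => // ->; rewrite iS.
- by rewrite (bigD1 i) //= eqxx big1 ?addr0 // => j /negbTE ->.
- rewrite (bigD1 i) //= eqxx scale1r big1 ?addr0 // => j /negbTE ->.
  by rewrite scale0r.
Qed.

Lemma conv_comb2 (S : {set 'I_m}) X Y (e : R) : 0 <= e <= 1 ->
  conv t S X -> conv t S Y -> conv t S ((1 - e) *: X + e *: Y).
Proof.
move=> /andP[e_ge0 e_le1] [lX [lX_ge0 lX_out lX1 ->]] [lY [lY_ge0 lY_out lY1 ->]].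
exists (fun i => (1 - e) * lX i + e * lY i); split.
- by move=> i; apply: addr_ge0; apply: mulr_ge0 => //; lra.
- by move=> i iS; rewrite lX_out ?lY_out // !mulr0 addr0.
- by rewrite big_split /= -!mulr_sumr lX1 lY1; lra.
- rewrite !scaler_sumr -big_split /=; apply: eq_bigr => i _.
  by rewrite [RHS]scalerDl !scalerA.
Qed.

Lemma conv_aff_poly_lt0 (S : {set 'I_m}) (P : {poly R}) X :
  (size P <= 4)%N -> conv t S X -> aff_poly P X < 0 ->
  exists2 x, x \in S & P.[t x] < 0.
Proof.
move=> sP [lam [lam_ge0 lam_out lam1 ->]].
rewrite aff_poly_comb //; under eq_bigr do rewrite aff_poly_moment //.
move=> sum_lt0; have [x lamP_lt0] : exists x, lam x * P.[t x] < 0.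
  apply/existsP; apply: contraLR sum_lt0 => /existsPn lamP_ge0.
  by rewrite -leNgt; apply: sumr_ge0 => i _; rewrite leNgt lamP_ge0.
exists x.
  by apply: contraLR lamP_lt0 => /lam_out ->; rewrite mul0r ltxx.
by rewrite ltNge; apply: contraTN lamP_lt0 => /(mulr_ge0 (lam_ge0 x)); rewrite leNgt.
Qed.

End Convexity.

Section Barycentric.
Variables (m : nat) (t : 'I_m -> R).
Hypothesis t_inj : injective t.

Definition lagrange (s : {set 'I_m}) j : {poly R} :=
  \prod_(i in s | i != j) ('X - (t i)%:P).

Lemma size_lagrange (s : {set 'I_m}) j :
  #|s| = 4%N -> j \in s -> size (lagrange s j) = 4%N.
Proof.
move=> s4 js; rewrite /lagrange size_prod; last by move=> i _; rewrite polyXsubC_eq0.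
under eq_bigr do rewrite size_XsubC.
rewrite sum_nat_const; suff -> : #|[pred i in s | i != j]| = 3%N by [].
have := cardsD1 j s; rewrite js s4 add1n => -[->].
by apply: eq_card => i; rewrite !inE andbC.
Qed.

Lemma lagrange_root (s : {set 'I_m}) j i :
  i \in s -> i != j -> (lagrange s j).[t i] = 0.
Proof.
move=> iS ij; rewrite /lagrange horner_prod (bigD1 i) /=; last by rewrite iS ij.
by rewrite hornerXsubC subrr mul0r.
Qed.

Lemma lagrange_neq0 (s : {set 'I_m}) j : (lagrange s j).[t j] != 0.
Proof.
rewrite /lagrange horner_prod; apply/prodf_neq0 => i /andP[_ ij].
by rewrite hornerXsubC subr_eq0 (inj_eq t_inj) eq_sym.
Qed.

(* Lagrange interpolation in the parameters of s is exact on cubics, which are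
   affine on the moment curve; so these are the barycentric coordinates. *)
Definition bary (s : {set 'I_m}) X j : R :=
  if j \in s then aff_poly (lagrange s j) X / (lagrange s j).[t j] else 0.

Lemma bary_moment (s : {set 'I_m}) i j :
  #|s| = 4%N -> i \in s -> bary s (moment3 (t i)) j = (i == j)%:R.
Proof.
move=> s4 iS; rewrite /bary; case: ifPn => [js | /negPf js]; last first.
  by case: eqP js => // <-; rewrite iS.
rewrite aff_poly_moment ?size_lagrange //; case: eqP => [-> | /eqP ij].
  by rewrite divff ?lagrange_neq0.
by rewrite lagrange_root ?mul0r.
Qed.

Lemma bary_uniq (s : {set 'I_m}) X (lam : 'I_m -> R) :
  #|s| = 4%N -> (forall i, i \notin s -> lam i = 0) -> \sum_i lam i = 1 ->
  X = \sum_i lam i *: moment3 (t i) -> lam =1 bary s X.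
Proof.
move=> s4 lam_out lam1 -> j; rewrite /bary; case: ifPn => [js | /lam_out //].
rewrite aff_poly_comb // (bigD1 j) //= big1 ?addr0.
  by rewrite aff_poly_moment ?size_lagrange // mulfK // lagrange_neq0.
move=> i ij; case: (boolP (i \in s)) => [iS | /lam_out ->]; last by rewrite mul0r.
by rewrite aff_poly_moment ?size_lagrange // lagrange_root // mulr0.
Qed.

Lemma lagrange_interp_Xn (s : {set 'I_m}) k : #|s| = 4%N -> (k < 4)%N ->
  \sum_j (if j \in s then t j ^+ k / (lagrange s j).[t j] else 0) *: lagrange s j
  = 'X^k.
Proof.
move=> s4 k4; apply/eqP; rewrite -subr_eq0; apply/eqP.
apply: (@roots_geq_poly_eq0 _ _ [seq t i | i <- enum s]).
- apply/allP => x /mapP[i]; rewrite mem_enum => iS ->.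
  rewrite /root hornerD hornerN hornerXn horner_sum (bigD1 i) //= big1.
    by rewrite iS hornerZ mulfVK ?lagrange_neq0 // addr0 subrr.
  move=> j ji; case: ifP => js; last by rewrite scale0r horner0.
  by rewrite hornerZ (lagrange_root (j:=j) iS) ?mulr0 // eq_sym.
- by rewrite map_inj_uniq ?enum_uniq.
- rewrite size_map -cardE s4; apply: leq_trans (size_polyD _ _) _.
  rewrite geq_max size_polyN size_polyXn k4 andbT.
  apply: leq_trans (size_sum _ _ _) _; apply/bigmax_leqP => j _.
  case: ifP => js; last by rewrite scale0r size_poly0.
  by apply: leq_trans (size_scale_leq _ _) _; rewrite size_lagrange.
Qed.

Lemma sum_bary_mulXn (s : {set 'I_m}) X k : #|s| = 4%N -> (k < 4)%N ->
  \sum_i bary s X i * t i ^+ k = aff_poly 'X^k X.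
Proof.
move=> s4 k4; rewrite -(lagrange_interp_Xn s4 k4) aff_poly_sum.
apply: eq_bigr => j _; rewrite /bary; case: ifP => _; last by rewrite !mul0r.
by rewrite mulrC mulrA mulrAC.
Qed.

Lemma sum_bary (s : {set 'I_m}) X : #|s| = 4%N -> \sum_i bary s X i = 1.
Proof.
move=> s4; have := sum_bary_mulXn X s4 (isT : (0 < 4)%N).
under eq_bigr do rewrite expr0 mulr1.
by move=> ->; rewrite /aff_poly coefXn big1 ?addr0 // => k _; rewrite coefXn mul0r.
Qed.

Lemma bary_combE (s : {set 'I_m}) X : #|s| = 4%N ->
  X = \sum_i bary s X i *: moment3 (t i).
Proof.
move=> s4; apply/rowP => k; rewrite summxE.
under eq_bigr do rewrite !mxE.
have k4 : (k.+1 < 4)%N by rewrite ltnS ltn_ord.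
rewrite (sum_bary_mulXn X s4 k4) /aff_poly coefXn add0r (bigD1 k) //= big1 ?addr0.
  by rewrite coefXn eqxx mul1r.
by move=> i ik; rewrite coefXn eqSS val_eqE (negPf ik) mul0r.
Qed.

Lemma bary_comb2 (s : {set 'I_m}) e X Y j :
  bary s ((1 - e) *: X + e *: Y) j = (1 - e) * bary s X j + e * bary s Y j.
Proof.
rewrite /bary; case: ifP => _; last by rewrite !mulr0 addr0.
by rewrite aff_poly_comb2 mulrDl !mulrA.
Qed.

Lemma conv_baryP (s : {set 'I_m}) X :
  #|s| = 4%N -> conv t s X <-> forall j, 0 <= bary s X j.
Proof.
move=> s4; split=> [[lam [lam_ge0 lam_out lam1 X_eq]] j | bary_ge0].
  by rewrite -(bary_uniq s4 lam_out lam1 X_eq).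
exists (bary s X); split=> //; last exact: bary_combE.
  by move=> i /negPf iS; rewrite /bary iS.
exact: sum_bary.
Qed.

End Barycentric.

Section Triangulation.
Variables (m : nat) (t : 'I_m -> R) (T : {set {set 'I_m}}).
Hypotheses (t_inj : injective t) (T_triang : triangulation t T).

Lemma mem_simplex_of_bary_gt0 s s0 X j : s \in T -> s0 \in T ->
  conv t s X -> conv t s0 X -> 0 < bary t s0 X j -> j \in s.
Proof.
move=> sT s0T Xs Xs0 bary_gt0; case: T_triang => card4 _ meet.
have [r r_sub r_conv] := meet s s0 sT s0T.
have [kap [_ kap_out kap1 X_eq]] := proj1 (r_conv X) (conj Xs Xs0).
have kap_out0 i : i \notin s0 -> kap i = 0.
  move=> is0; apply: kap_out; apply: contra is0 => ir.
  by have := subsetP r_sub i ir; rewrite inE => /andP[].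
have jr : j \in r.
  apply: contraTT bary_gt0 => /kap_out.
  by rewrite (bary_uniq t_inj (card4 _ s0T) kap_out0 kap1 X_eq) => ->; rewrite ltxx.
by have := subsetP r_sub j jr; rewrite inE => /andP[].
Qed.

Lemma triangulation_perturbed_simplex X Y :
  cyclic_polytope t X -> cyclic_polytope t Y ->
  exists s e, [/\ s \in T, 0 < e, conv t s X & conv t s ((1 - e) *: X + e *: Y)].
Proof.
move=> XC YC; case: T_triang => card4 cover _.
(* One e serves all pairs (simplex, vertex) at once: a negative coordinate of X
   in any simplex stays negative after the push. *)
have [e e01 small] := exists_small_perturbation
  (fun sj : {set 'I_m} * 'I_m => bary t sj.1 X sj.2) (fun sj => bary t sj.1 Y sj.2).
have [s sT Zs] : exists2 s, s \in T & conv t s ((1 - e) *: X + e *: Y).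
  by apply/cover; apply: conv_comb2 => //; case/andP: e01 => /ltW -> ->.
exists s, e; split=> //; first by case/andP: e01.
apply/(conv_baryP t_inj _ (card4 _ sT)) => j; rewrite leNgt; apply/negP.
move/(small (s, j)) => /=; rewrite -bary_comb2 ltNge.
by move/(conv_baryP t_inj _ (card4 _ sT)): Zs => ->.
Qed.

Lemma edge_face_of_poly_lt0 s0 v w z (P : {poly R}) :
  s0 \in T -> v \in s0 -> w \in s0 -> v != w ->
  (size P <= 4)%N -> root P (t v) -> root P (t w) -> P.[t z] < 0 ->
  exists x, F2T T [set v; w; x] /\ P.[t x] < 0.
Proof.
move=> s0T vs0 ws0 vw sP /eqP Pv /eqP Pw Pz; case: T_triang => card4 _ _.
have half01 : 0 <= (2^-1 : R) <= 1 by apply/andP; split; lra.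
pose mid := (1 - 2^-1) *: moment3 (t v) + 2^-1 *: moment3 (t w).
have mid_s0 : conv t s0 mid by apply: conv_comb2 => //; apply: conv_vertex.
have midC : cyclic_polytope t mid.
  by apply: conv_comb2 => //; apply: conv_vertex; rewrite inE.
have zC : cyclic_polytope t (moment3 (t z)) by apply: conv_vertex; rewrite inE.
have [s [e [sT e_gt0 mid_s Z_s]]] := triangulation_perturbed_simplex midC zC.
have in_s j : j \in s0 -> bary t s0 mid j = 2^-1 -> j \in s.
  move=> js0 bary_half; apply: (mem_simplex_of_bary_gt0 sT s0T mid_s mid_s0).
  by rewrite bary_half; lra.
have vs : v \in s.
  apply: in_s; rewrite // bary_comb2 !bary_moment ?card4 //.
  by rewrite eqxx eq_sym (negPf vw) mulr1 mulr0 addr0; lra.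
have ws : w \in s.
  apply: in_s; rewrite // bary_comb2 !bary_moment ?card4 //.
  by rewrite eqxx (negPf vw) mulr1 mulr0 add0r; lra.
have [x xs Px] : exists2 x, x \in s & P.[t x] < 0.
  apply: conv_aff_poly_lt0 Z_s _ => //.
  rewrite !aff_poly_comb2 !aff_poly_moment // Pv Pw; nra.
exists x; split=> //; apply: F2T_of_simplex sT vs ws xs vw _ _.
  by apply: contraTneq Px => <-; rewrite Pv ltxx.
by apply: contraTneq Px => <-; rewrite Pw ltxx.
Qed.

End Triangulation.
End MomentCurve.

Lemma strictly_increasing_lt (R : realType) m (t : 'I_m -> R) :
  strictly_increasing t -> forall i j, (t i < t j) = (i < j)%N.
Proof.
move=> t_incr i j; case: ltngtP => [/t_incr // | /t_incr tji | /val_inj ->].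
  by rewrite lt_gtF.
by rewrite ltxx.
Qed.

Lemma strictly_increasing_inj (R : realType) m (t : 'I_m -> R) :
  strictly_increasing t -> injective t.
Proof.
move=> t_incr i j tij.
by case: (ltngtP i j) => [/t_incr | /t_incr | /val_inj //]; rewrite tij ltxx.
Qed.

Lemma not_F1C_bounds n (v w : 'I_n.+2) : (v < w)%N -> ~ F1C [set v; w] ->
  [/\ (0 < v)%N, (w < n.+1)%N & (v.+1 < w)%N].
Proof.
move=> vw not_F1C; have w_lt := ltn_ord w.
suff : ~~ [|| v == 0 :> nat, w == n.+1 :> nat | w == v.+1 :> nat].
  by case/norP => v_gt0 /norP[w_lt_n1 w_gt_v1]; split; lia.
apply/negP => boundary; apply: not_F1C; exists v, w; split=> //.
have [v0|v_gt0] := posnP v; have [w_n|w_lt_n1] := eqVneq (w : nat) n.+1;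
  [apply: Or41 | apply: Or42 | apply: Or43 | apply: Or44] => /=; lia.
Qed.

Section InternalEdge.
Variables (R : realType) (n : nat) (t : 'I_n.+2 -> R).
Variables (T : {set {set 'I_n.+2}}) (s0 : {set 'I_n.+2}) (v w : 'I_n.+2).
Hypotheses (t_incr : strictly_increasing t) (T_triang : triangulation t T).
Hypotheses (vw : (v < w)%N) (s0T : s0 \in T) (vs0 : v \in s0) (ws0 : w \in s0).

Let t_lt := strictly_increasing_lt t_incr.
Let face z (P : {poly R}) := edge_face_of_poly_lt0 (z := z) (P := P)
  (strictly_increasing_inj t_incr) T_triang s0T vs0 ws0 (negbT (ltn_eqF vw)).
Let tvw : t v < t w. Proof. by rewrite t_lt. Qed.

Lemma face_before : (0 < v)%N ->
  exists2 a : 'I_n.+2, (a < v)%N & F2T T [set v; w; a].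
Proof.
move=> v_gt0.
have [|||| a [Fa]] := face (z := ord0)
  (P := \prod_(x <- [:: t w; t w; t v]) ('X - x%:P)).
- by rewrite size_prod_XsubC.
- by rewrite root_prod_XsubC !inE eqxx !orbT.
- by rewrite root_prod_XsubC !inE eqxx.
- by rewrite horner_prod !big_cons big_nil !hornerXsubC mulr1 mulrA -expr2
    sqr_mul_lt0_before // t_lt.
- rewrite horner_prod !big_cons big_nil !hornerXsubC mulr1 mulrA -expr2.
  by rewrite sqr_mul_lt0_before // t_lt; exists a.
Qed.

Lemma face_between : (v.+1 < w)%N ->
  exists2 b : 'I_n.+2, (v < b < w)%N & F2T T [set v; w; b].
Proof.
move=> gap; have v1_lt : (v.+1 < n.+2)%N by apply: ltn_trans gap (ltn_ord w).
have [|||| b [Fb]] := face (z := inord v.+1)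
  (P := \prod_(x <- [:: t v; t w]) ('X - x%:P)).
- by rewrite size_prod_XsubC.
- by rewrite root_prod_XsubC !inE eqxx.
- by rewrite root_prod_XsubC !inE eqxx !orbT.
- by rewrite horner_prod !big_cons big_nil !hornerXsubC mulr1 mul_lt0_between //
    !t_lt inordK // ltnSn.
- rewrite horner_prod !big_cons big_nil !hornerXsubC mulr1.
  by rewrite mul_lt0_between // !t_lt; exists b.
Qed.

Lemma face_after : (w < n.+1)%N ->
  exists2 c : 'I_n.+2, (w < c)%N & F2T T [set v; w; c].
Proof.
move=> w_lt.
have [|||| c [Fc]] := face (z := ord_max)
  (P := - \prod_(x <- [:: t v; t v; t w]) ('X - x%:P)).
- by rewrite size_polyN size_prod_XsubC.
- by rewrite rootN root_prod_XsubC !inE eqxx.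
- by rewrite rootN root_prod_XsubC !inE eqxx !orbT.
- by rewrite hornerN horner_prod !big_cons big_nil !hornerXsubC mulr1 mulrA -expr2
    oppr_lt0 sqr_mul_gt0_after // t_lt.
- rewrite hornerN horner_prod !big_cons big_nil !hornerXsubC mulr1 mulrA -expr2.
  by rewrite oppr_lt0 sqr_mul_gt0_after // t_lt; exists c.
Qed.

End InternalEdge.

Theorem lemma4 (R : realType) (n : nat) (t : 'I_(n.+2) -> R)
  (T : {set {set 'I_(n.+2)}}) (v w : 'I_(n.+2)) :
  (2 <= n)%N ->
  strictly_increasing t ->
  triangulation t T ->
  (v < w)%N ->
  F1T T [set v; w] ->
  ~ F1C [set v; w] ->
  exists a b c : 'I_(n.+2),
    [/\ (a < v)%N, (v < b)%N, (b < w)%N & (w < c)%N] /\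
    [/\ F2T T [set v; w; a], F2T T [set v; w; b] & F2T T [set v; w; c]].
Proof.
(* The bound 2 <= n is implied by the existence of an internal edge. *)
move=> _ t_incr T_triang vw [_ [s0 s0T vw_s0]] not_F1C.
have [vs0 ws0] : v \in s0 /\ w \in s0.
  by split; apply: (subsetP vw_s0); rewrite !inE eqxx ?orbT.
have [v_gt0 w_lt gap] := not_F1C_bounds vw not_F1C.
have [a av Fa] := face_before t_incr T_triang vw s0T vs0 ws0 v_gt0.
have [b /andP[vb bw] Fb] := face_between t_incr T_triang vw s0T vs0 ws0 gap.
have [c wc Fc] := face_after t_incr T_triang vw s0T vs0 ws0 w_lt.
by exists a, b, c.
Qed.
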